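(* Let $p$ be even, $V=\{1,\dots,p\}$, and $\tau$ a twin-pairing function on $V$. The number of pdCGs (equivalently, of RCON models for paired data) on $V$ is $$|\mathcal{P}(V)|=2^{p/2}\sum_{i=0}^{p(p-2)/4}\binom{p(p-2)/4}{i}\,2^{\binom{p}{2}-2i}.$$
   Context: A twin-pairing function is a map $\tau:V\to V$ such that $\tau(i)=j$ implies $\tau(j)=i$ and there is a partition $V=L\cup R$, $L\cap R=\emptyset$, with $\tau(L)=R$ (so $|L|=|R|=p/2$). Let $F_V=\{(i,j)\mid i,j\in V,\ i<j\}$ and extend $\tau$ to edges by $\tau(i,j)=(\tau(i),\tau(j))$, endpoints reordered to lie in $F_V$. A coloured graph with vertex set $V$ is a pair $(\mathcal{V},\mathcal{E})$ where $\mathcal{V}$ is a partition of $V$ and $\mathcal{E}$ is a partition of some edge set $E\subseteq F_V$. A colour class is atomic if it has exactly one element and twin-pairing if it is of the form $\{i,\tau(i)\}$ or $\{(i,j),\tau(i,j)\}$ with $(i,j)\neq\tau(i,j)$. A pdCG (coloured graph for paired data) is a coloured graph in which every colour class is atomic or twin-pairing; $\mathcal{P}(V)$ is the set of pdCGs on $V$. Each pdCG $\mathcal{G}$ defines the RCON model of normal distributions on $\mathbb{R}^V$ whose concentration matrix has zero entries for non-edges and equal entries within each colour class, and distinct pdCGs define distinct models. *)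

From mathcomp Require Import all_boot.
Set Implicit Arguments. Unset Strict Implicit. Unset Printing Implicit Defensive.

(* Vertex set V = {1,...,p} is represented by 'I_p (i.e. {0,...,p-1}). *)

Definition twin_pairing (p : nat) (tau : 'I_p -> 'I_p) : Prop :=
  (forall i j, tau i = j -> tau j = i) /\
  exists L R : {set 'I_p},
    [/\ L :&: R = set0, L :|: R = [set: 'I_p] & tau @: L = R].

Definition edge (p : nat) := ('I_p * 'I_p)%type.

Definition FV (p : nat) : {set edge p} := [set e : edge p | e.1 < e.2].

Definition tau_edge (p : nat) (tau : 'I_p -> 'I_p) (e : edge p) : edge p :=
  if tau e.1 < tau e.2 then (tau e.1, tau e.2) else (tau e.2, tau e.1).

(* coloured graph (calV, calE): calV a partition of V, calE a partition
   of some edge set E included in F_V (E = cover calE). Boolean predicates. *)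
Definition coloured_graph (p : nat)
  (G : {set {set 'I_p}} * {set {set edge p}}) : bool :=
  [&& partition G.1 [set: 'I_p],
      partition G.2 (cover G.2) & cover G.2 \subset FV p].

Definition atomic (T : finType) (C : {set T}) : bool := #|C| == 1.

Definition twin_vertex_class (p : nat) (tau : 'I_p -> 'I_p) (C : {set 'I_p})
  : bool := [exists i, C == [set i; tau i]].

Definition twin_edge_class (p : nat) (tau : 'I_p -> 'I_p) (C : {set edge p})
  : bool := [exists e, [&& e \in FV p, e != tau_edge tau e &
                                      C == [set e; tau_edge tau e]]].

Definition pdCG (p : nat) (tau : 'I_p -> 'I_p)
  (G : {set {set 'I_p}} * {set {set edge p}}) : bool :=
  [&& coloured_graph G,
      [forall C in G.1, atomic C || twin_vertex_class tau C] &
      [forall C in G.2, atomic C || twin_edge_class tau C]].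

Definition pdCGs (p : nat) (tau : 'I_p -> 'I_p)
  : {set {set {set 'I_p}} * {set {set edge p}}} :=
  [set G | pdCG tau G].

(* A pdCG is an independent choice of a colouring of the vertices
   and of a colouring of some set of edges, and in both cases every colour class
   is a singleton or a twin pair, i.e. lies inside one orbit of the involution
   tau (on V) or of its extension to F_V.  Hence the colourings factor as a
   product over the orbits of local colourings.  tau has no fixed point, and an
   orbit {i, tau i} carries 2 partitions, whence 2^(p/2) vertex colourings.  On
   F_V there are p/2 fixed edges (i, tau i), each absent or a colour class
   (2 choices), and the other p(p-2)/4 orbits {e, e'} carry 5 partial
   partitions: none, {e}, {e'}, {e},{e'} and {e,e'}.  Thus
   |P(V)| = 2^(p/2) * 2^(p/2) * 5^(p(p-2)/4), and expanding 5 = 4 + 1 by the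
   binomial theorem gives the stated sum. *)

From mathcomp Require Import all_boot zify.
Set Implicit Arguments. Unset Strict Implicit. Unset Printing Implicit Defensive.

Section Admissible.
Variables (T : finType) (allowed : pred {set T}) (full : bool).

(* With [full], Q must partition all of A (vertex colourings); otherwise it
   partitions some subset of A (edge colourings). *)
Definition admissible (A : {set T}) (Q : {set {set T}}) : bool :=
  [&& trivIset Q, set0 \notin Q, cover Q \subset A,
      full ==> (cover Q == A) & [forall C in Q, allowed C]].

Local Notation adm A := [set Q | admissible A Q].

Lemma admissibleS (A : {set T}) Q C : admissible A Q -> C \in Q -> C \subset A.
Proof.
by case/and5P=> _ _ sQA _ _ CQ; apply: subset_trans sQA; exact: bigcup_sup.
Qed.

Lemma admissible_neq0 (A : {set T}) Q C : admissible A Q -> C \in Q -> C != set0.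
Proof. by case/and5P=> _ Q0 _ _ _; apply: contraTneq => ->. Qed.

Lemma admissible_restrict (A B : {set T}) (Q : {set {set T}}) : [disjoint A & B] ->
    Q = (Q ::&: A) :|: (Q ::&: B) ->
  admissible (A :|: B) Q -> admissible A (Q ::&: A).
Proof.
move=> dAB defQ admQ; have /and5P[tQ Q0 _ /implyP covQ /forall_inP aQ] := admQ.
have sQA : Q ::&: A \subset Q by rewrite -setI_powerset subsetIl.
apply/and5P; split.
- exact: trivIsetI.
- by apply: contra Q0; apply: (subsetP sQA).
- by apply: subset_trans (cover_setI Q A) (subsetIr _ _).
- apply/implyP=> /covQ /eqP covAB.
  rewrite eqEsubset (subset_trans (cover_setI Q A)) ?subsetIr //=.
  apply/subsetP=> t tA; have : t \in cover Q by rewrite covAB inE tA.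
  case/bigcupP=> C CQ tC; apply/bigcupP; exists C => //.
  move: CQ; rewrite {1}defQ => /setUP[//|].
  by rewrite inE => /andP[_ /subsetP/(_ t tC)]; rewrite (disjointFr dAB tA).
- by apply/forall_inP=> C /(subsetP sQA); apply: aQ.
Qed.

Lemma admissibleU (A B : {set T}) (Q1 Q2 : {set {set T}}) : [disjoint A & B] ->
  admissible A Q1 -> admissible B Q2 -> admissible (A :|: B) (Q1 :|: Q2).
Proof.
move=> dAB adm1 adm2.
have /and5P[tQ1 Q10 sQ1 /implyP cQ1 /forall_inP aQ1] := adm1.
have /and5P[tQ2 Q20 sQ2 /implyP cQ2 /forall_inP aQ2] := adm2.
have covU : cover (Q1 :|: Q2) = cover Q1 :|: cover Q2 by rewrite /cover bigcup_setU.
apply/and5P; split.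
- by apply: trivIsetU => //; apply: disjointW dAB.
- by rewrite inE negb_or Q10.
- by rewrite covU setUSS.
- by apply/implyP=> fu; rewrite covU (eqP (cQ1 fu)) (eqP (cQ2 fu)).
- by apply/forall_inP=> C /setUP[/aQ1|/aQ2].
Qed.

Lemma restrict_admissibleU (A B : {set T}) (Q1 Q2 : {set {set T}}) : [disjoint A & B] ->
  admissible A Q1 -> admissible B Q2 -> (Q1 :|: Q2) ::&: A = Q1.
Proof.
move=> dAB adm1 adm2; apply/setP=> C; rewrite !inE.
case C1: (C \in Q1); first by rewrite (admissibleS adm1 C1).
apply/andP=> -[C2 sCA]; have /set0Pn[t tC] := admissible_neq0 adm2 C2.
have sCB := admissibleS adm2 C2.
by have := subsetP sCB t tC; rewrite (disjointFr dAB (subsetP sCA t tC)).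
Qed.

Lemma card_admissibleU (A B : {set T}) : [disjoint A & B] ->
    (forall C, allowed C -> C != set0 -> C \subset A :|: B ->
       (C \subset A) || (C \subset B)) ->
  #|adm (A :|: B)| = #|adm A| * #|adm B|.
Proof.
move=> dAB splitAB; have dBA : [disjoint B & A] by rewrite disjoint_sym.
have QE Q : admissible (A :|: B) Q -> Q = (Q ::&: A) :|: (Q ::&: B).
  move=> admQ; apply/setP=> C; rewrite !inE -andb_orr; apply/esym/andb_idr => CQ.
  have /and5P[_ _ _ _ /forall_inP aQ] := admQ.
  apply: splitAB; first exact: aQ.
    exact: admissible_neq0 admQ CQ.
  exact: admissibleS admQ CQ.
have admE : adm (A :|: B) = [set QQ.1 :|: QQ.2 | QQ in setX (adm A) (adm B)].
  apply/setP=> Q; rewrite inE; apply/idP/imsetP=> [admQ|[[Q1 Q2]]].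
    exists (Q ::&: A, Q ::&: B); last exact: QE.
    have admQ' : admissible (B :|: A) Q by rewrite setUC.
    rewrite !inE (admissible_restrict dAB (QE Q admQ) admQ) /=.
    by rewrite (admissible_restrict dBA _ admQ') // setUC -QE.
  by rewrite !inE /= => /andP[adm1 adm2] ->; apply: admissibleU.
rewrite admE card_in_imset ?cardsX //.
move=> [Q1 Q2] [Q1' Q2']; rewrite !inE /= => /andP[adm1 adm2] /andP[adm1' adm2'] eqQ.
congr pair.
  have <- := restrict_admissibleU dAB adm1 adm2.
  by rewrite eqQ (restrict_admissibleU dAB adm1' adm2').
have <- := restrict_admissibleU dBA adm2 adm1.
by rewrite setUC eqQ setUC (restrict_admissibleU dBA adm2' adm1').
Qed.

Lemma admissible0E : adm set0 = [set set0].
Proof.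
apply/setP=> Q; rewrite !inE; apply/idP/eqP=> [admQ|->].
  apply/setP=> C; rewrite inE; apply/negbTE/negP=> CQ.
  by have := admissible_neq0 admQ CQ; rewrite -subset0 (admissibleS admQ CQ).
rewrite /admissible /trivIset /cover !big_set0 cards0 inE sub0set !eqxx implybT.
by apply/forall_inP => C; rewrite inE.
Qed.

Lemma card_admissible_cover (Pi : {set {set T}}) : trivIset Pi ->
    (forall C, allowed C -> C != set0 -> C \subset cover Pi ->
       exists2 O, O \in Pi & C \subset O) ->
  #|adm (cover Pi)| = \prod_(O in Pi) #|adm O|.
Proof.
elim: {Pi}_.+1 {-2}Pi (ltnSn #|Pi|) => // n IHn Pi.
have [-> _ _ _|[O OPi] ltPi tPi PiC] := set_0Vmem Pi.
  by rewrite big_set0 /cover big_set0 admissible0E cards1.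
have covPi : cover Pi = O :|: cover (Pi :\ O) by rewrite /cover (big_setD1 O).
have dO : [disjoint O & cover (Pi :\ O)].
  by rewrite coverD1 // disjoint_sym disjoints_subset setDE subsetIr.
have IH : #|adm (cover (Pi :\ O))| = \prod_(O' in Pi :\ O) #|adm O'|.
  apply: IHn; first by rewrite -ltnS (leq_trans _ ltPi) // (cardsD1 O Pi) OPi.
    exact: trivIsetD.
  move=> C aC C0 sC; have sCPi : C \subset cover Pi by rewrite covPi subsetU ?sC ?orbT.
  have [O' O'Pi sCO'] := PiC C aC C0 sCPi.
  exists O' => //; rewrite !inE O'Pi andbT; apply: contraNneq C0 => eqO'.
  rewrite -subset0 -(setIid C); move: dO; rewrite -setI_eq0 => /eqP <-.
  by rewrite setISS // -eqO'.
rewrite (big_setD1 O) //= -IH covPi card_admissibleU // => C aC C0 sC.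
have [O' O'Pi sCO'] : exists2 O', O' \in Pi & C \subset O' by apply: PiC; rewrite ?covPi.
have [<-|neqO] := eqVneq O' O; first by rewrite sCO'.
by rewrite orbC (subset_trans sCO') //; apply: bigcup_sup; rewrite !inE neqO.
Qed.

Definition discrete (S : {set T}) : {set {set T}} := [set [set t] | t in S].

Local Notation adm_discrete S :=
  [set Q : {set {set T}} | (Q \subset discrete S) && admissible S Q].

Lemma set1_neq0 (t : T) : [set t] != set0.
Proof. by apply/set0Pn; exists t; rewrite set11. Qed.

Lemma admissible_discrete (S : {set T}) (Q : {set {set T}}) :
    {in S, forall t, allowed [set t]} -> Q \subset discrete S ->
  admissible S Q = (full ==> (Q == discrete S)).
Proof.
move=> aS sQ; have sQS C : C \in Q -> exists2 t, t \in S & C = [set t].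
  by move/(subsetP sQ)/imsetP.
have tQ : trivIset Q.
  apply: trivIsetS sQ _; apply/trivIsetP=> _ _ /imsetP[t _ ->] /imsetP[u _ ->] ntu.
  by rewrite disjoints1 inE; apply: contraNneq ntu => ->.
have Q0 : set0 \notin Q.
  by apply/negP=> /sQS[t _ /esym/eqP]; rewrite (negbTE (set1_neq0 t)).
have covQ : cover Q \subset S by apply/bigcupsP=> C /sQS[t tS ->]; rewrite sub1set.
have aQ : [forall C in Q, allowed C] by apply/forall_inP=> C /sQS[t tS ->]; apply: aS.
rewrite /admissible tQ Q0 covQ aQ andbT; congr (full ==> _).
apply/eqP/eqP=> [covS|->]; last first.
  apply/setP=> t; rewrite cover_imset; apply/bigcupP/idP=> [[u uS /set1P->]|tS] //.
  by exists t; rewrite ?set11.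
apply/eqP; rewrite eqEsubset sQ; apply/subsetP=> _ /imsetP[t tS ->].
move: tS; rewrite -covS => /bigcupP[C CQ tC].
by have [u _ defC] := sQS C CQ; move: tC; rewrite defC => /set1P ->; rewrite -defC.
Qed.

Lemma card_admissible_discrete (S : {set T}) : {in S, forall t, allowed [set t]} ->
  #|adm_discrete S| = if full then 1 else 2 ^ #|S|.
Proof.
move=> aS; have -> : adm_discrete S =
    if full then [set discrete S] else powerset (discrete S).
  apply/setP=> Q; rewrite inE; have [sQ|nsQ] /= := boolP (Q \subset _).
    by rewrite admissible_discrete //; case: full; rewrite !inE ?powersetE.
  case: full; rewrite !inE ?powersetE ?(negbTE nsQ) //.
  by apply/esym/negbTE; apply: contraNneq nsQ => ->.
by case: full => /=; rewrite ?cards1 // card_powerset card_imset //; apply: set1_inj.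
Qed.

Lemma card_admissible1 x : allowed [set x] -> #|adm [set x]| = if full then 1 else 2.
Proof.
move=> ax; suff -> : adm [set x] = adm_discrete [set x].
  by rewrite card_admissible_discrete ?cards1 // => t /set1P->.
apply/setP=> Q; rewrite !inE; apply/esym/andb_idl=> admQ; apply/subsetP=> C CQ.
have := admissibleS admQ CQ; rewrite subset1 (negbTE (admissible_neq0 admQ CQ)) orbF.
by move/eqP->; rewrite /discrete imset_set1 set11.
Qed.

Lemma mem_discrete_small (S C : {set T}) :
  #|S| <= 2 -> C \subset S -> C != set0 -> C != S -> C \in discrete S.
Proof.
move=> S2 sCS C0 nCS; have : #|C| < #|S|.
  by rewrite ltnNge; apply: contra nCS => leSC; rewrite eqEcard sCS leSC.
move=> /leq_trans/(_ S2); rewrite ltnS leq_eqVlt ltnS leqn0 cards_eq0 (negbTE C0) orbF.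
by case/cards1P=> t defC; apply/imsetP; exists t; rewrite // -sub1set -defC.
Qed.

Lemma card_admissible2 x y : x != y ->
    allowed [set x] -> allowed [set y] -> allowed [set x; y] ->
  #|adm [set x; y]| = if full then 2 else 5.
Proof.
move=> nxy ax ay axy; set S := [set x; y].
have S0 : S != set0 by apply/set0Pn; exists x; rewrite set21.
have S2 : #|S| = 2 by rewrite cards2 nxy.
have SD : S \notin discrete S.
  by apply/imsetP=> -[t _ eqS]; move: S2; rewrite eqS cards1.
suff -> : adm S = [set S] |: adm_discrete S.
  rewrite cardsU1 card_admissible_discrete ?S2; last by move=> t /set2P[]->.
  by rewrite inE sub1set (negbTE SD); case: full.
apply/setP=> Q; rewrite !inE; apply/idP/idP=> [admQ|/orP[/eqP->|/andP[//]]].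
  have /and5P[tQ _ _ _ _] := admQ.
  apply/orP; have [SQ|nSQ] := boolP (S \in Q); [left|right; rewrite admQ andbT].
    rewrite eqEsubset sub1set SQ andbT; apply/subsetP=> C CQ; rewrite inE.
    apply: contraTT (admissible_neq0 admQ CQ) => nCS; rewrite negbK -subset0.
    have := trivIsetP tQ C S CQ SQ nCS; rewrite disjoints_subset => sCS.
    by rewrite -(setICr S) subsetI (admissibleS admQ CQ).
  apply/subsetP=> C CQ; apply: mem_discrete_small; rewrite ?S2 ?(admissibleS admQ CQ) //.
    exact: admissible_neq0 admQ CQ.
  by apply: contraNneq nSQ => <-.
rewrite /admissible trivIset1 inE eq_sym (negbTE S0) cover1 subxx eqxx implybT /=.
by apply/forall_inP=> C /set1P->.
Qed.

End Admissible.

Section TwinOrbits.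
Variables (T : finType) (sigma : T -> T) (D : {set T}).
Hypothesis sigmaD : {in D, forall x, sigma x \in D}.
Hypothesis sigmaK : {in D, involutive sigma}.

Definition twin_orbits : {set {set T}} := [set [set x; sigma x] | x in D].

Definition twin_block (C : {set T}) : bool :=
  atomic C || [exists x, C == [set x; sigma x]].

Lemma eq_twin_orbit x t : x \in D -> t \in [set x; sigma x] ->
  [set t; sigma t] = [set x; sigma x].
Proof. by move=> xD /set2P[]->; rewrite // sigmaK // setUC. Qed.

Lemma twin_orbits_partition : partition twin_orbits D.
Proof.
apply/and3P; split.
- rewrite cover_imset; apply/eqP/setP=> t; apply/bigcupP/idP=> [[x xD /set2P[]->]|tD].
  + by [].
  + exact: sigmaD.
  + by exists t; rewrite ?set21.
- apply/trivIsetP=> _ _ /imsetP[x xD ->] /imsetP[y yD ->].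
  apply: contraR; rewrite -setI_eq0 => /set0Pn[t /setIP[tx ty]].
  by rewrite -(eq_twin_orbit xD tx) (eq_twin_orbit yD ty).
- by apply/imsetP=> -[x _ /esym/eqP]; apply/negP/set0Pn; exists x; rewrite set21.
Qed.

Lemma twin_orbit_card1 x : (#|[set x; sigma x]| == 1) = (sigma x == x).
Proof. by rewrite cards2 eqSS eqb0 negbK eq_sym. Qed.

Lemma twin_orbit_card O : O \in twin_orbits -> (#|O| == 2) = ~~ (#|O| == 1).
Proof. by case/imsetP=> x _ ->; rewrite cards2; case: (x != sigma x). Qed.

Lemma twin_block_sub (C : {set T}) : twin_block C -> C != set0 -> C \subset D ->
  exists2 O, O \in twin_orbits & C \subset O.
Proof.
move=> /orP[/cards1P[x ->]|/existsP[x /eqP ->]] _ sCD.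
  by exists [set x; sigma x]; [apply: imset_f; rewrite -sub1set | rewrite sub1set set21].
by exists [set x; sigma x]; first by apply: imset_f; rewrite (subsetP sCD) ?set21.
Qed.

Lemma twin_orbit_block (O C : {set T}) : O \in twin_orbits -> C \subset O -> C != set0 ->
  twin_block C.
Proof.
case/imsetP=> x _ -> sC C0; have [->|nCO] := eqVneq C [set x; sigma x].
  by apply/orP; right; apply/existsP; exists x.
have O2 : #|[set x; sigma x]| <= 2 by rewrite cards2 ltnS leq_b1.
have /imsetP[t _ ->] := mem_discrete_small O2 sC C0 nCO.
by rewrite /twin_block /atomic cards1.
Qed.

Local Notation orbits1 := [set O in twin_orbits | #|O| == 1].
Local Notation orbits2 := [set O in twin_orbits | #|O| == 2].

Lemma card_twin_orbits1 : #|orbits1| = #|[set x in D | sigma x == x]|.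
Proof.
rewrite -(card_imset _ (@set1_inj T)); congr #|pred_of_set _|.
apply/setP=> O; rewrite inE; apply/andP/imsetP=> [[/imsetP[x xD ->]]|[x]].
  by rewrite twin_orbit_card1 => /eqP fx; exists x; rewrite ?inE ?xD ?fx ?eqxx ?setUid.
rewrite inE => /andP[xD /eqP fx] ->; rewrite cards1; split=> //.
by apply/imsetP; exists x; rewrite // fx setUid.
Qed.

Lemma card_twin_domain : #|D| = #|orbits1| + 2 * #|orbits2|.
Proof.
rewrite (card_partition twin_orbits_partition).
rewrite (bigID (fun O : {set T} => #|O| == 1)) /= mulnC -!sum1_card big_distrl /=.
congr (_ + _); apply: eq_big => O; rewrite ?inE.
- by [].
- by case/andP=> _ /eqP.
- by case O_orbit: (O \in _); rewrite //= twin_orbit_card.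
- by case/andP=> O_orbit; rewrite -twin_orbit_card // => /eqP.
Qed.

Lemma card_admissible_twin full :
  #|[set Q | admissible twin_block full D Q]| =
    (if full then 1 else 2) ^ #|orbits1| * (if full then 2 else 5) ^ #|orbits2|.
Proof.
have partO := twin_orbits_partition.
rewrite -{1}(cover_partition partO) card_admissible_cover; first last.
- by move=> C aC C0; rewrite (cover_partition partO); apply: twin_block_sub.
- exact: partition_trivIset partO.
rewrite (bigID (fun O : {set T} => #|O| == 1)) /= -!prod_nat_const.
congr (_ * _); apply: eq_big => O.
- by rewrite inE.
- case/andP=> /imsetP[x _ ->]; rewrite twin_orbit_card1 => /eqP ->; rewrite setUid.
  by rewrite card_admissible1 // /twin_block /atomic cards1.
- by rewrite inE; case O_orbit: (O \in _); rewrite //= twin_orbit_card.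
move=> /andP[O_orbit].
have blockO (C : {set T}) : C \subset O -> C != set0 -> twin_block C.
  by move=> sCO C0; apply: twin_orbit_block sCO C0.
case/imsetP: O_orbit blockO => x _ -> blockO; rewrite twin_orbit_card1 eq_sym => nx.
rewrite card_admissible2 ?blockO ?set1_neq0 ?sub1set ?set21 ?set22 //.
by apply/set0Pn; exists x; rewrite set21.
Qed.

End TwinOrbits.

Lemma twin_pairing_involution p (tau : 'I_p -> 'I_p) :
  twin_pairing tau -> involutive tau /\ (forall i, tau i != i).
Proof.
case=> tau_sym [L [R [/setP LR0 /setP LRU tLR]]].
have tauK : involutive tau by move=> i; apply: tau_sym.
split=> // i; apply/eqP=> fi; have := LR0 i; rewrite !inE.
have := LRU i; rewrite !inE => /orP[iL|iR].
  by rewrite iL -tLR -{1}fi imset_f.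
have /imsetP[j jL defi] : i \in tau @: L by rewrite tLR.
have eji : j = i by rewrite -fi defi tauK.
by rewrite -{1}eji jL iR.
Qed.

Lemma card_FV p : #|FV p| = 'C(p, 2).
Proof.
have le_mem (a b c : 'I_p) : a < b -> c \in [set a; b] -> a <= c.
  by move=> ab /set2P[]->; rewrite // ltnW.
have inj : {in FV p &, injective (fun e : edge p => [set e.1; e.2])}.
  move=> [a b] [c d]; rewrite !inE /= => ab cd eqS.
  have eac : a = c.
    apply/val_inj/eqP; rewrite eqn_leq (le_mem _ _ _ cd) ?(le_mem _ _ _ ab) //.
      by rewrite eqS set21.
    by rewrite -eqS set21.
  move: (set22 a b); rewrite eqS -eac => /set2P[eba|->] //.
  by move: ab; rewrite eba ltnn.
rewrite -[in RHS](card_ord p) -card_draws -(card_in_imset inj).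
congr #|pred_of_set _|; apply/setP=> A; rewrite inE; apply/imsetP/cards2P.
  by case=> -[a b]; rewrite inE /= => ab ->; exists a, b; rewrite neq_ltn ab.
case=> a [b [nab ->]]; case: (ltngtP a b) => [ab|ba|/val_inj eqab].
- by exists (a, b); rewrite ?inE.
- by exists (b, a); rewrite ?inE // setUC.
- by rewrite eqab eqxx in nab.
Qed.

Lemma bin2_even p : ~~ odd p -> 'C(p, 2) = p %/ 2 + 2 * (p * (p - 2) %/ 4).
Proof.
move=> /negPf p_even; have := odd_double_half p; rewrite p_even add0n => defp.
by rewrite bin2 -defp; nia.
Qed.

Lemma sum_binomial_pow4 n c : 2 * n <= c ->
  \sum_(i < n.+1) 'C(n, i) * 2 ^ (c - 2 * i) = 2 ^ (c - 2 * n) * 5 ^ n.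
Proof.
move=> le2nc; rewrite (_ : 5 = 4 + 1) // expnDn big_distrr /=; apply: eq_bigr => i _.
have le_in : i <= n by rewrite -ltnS.
rewrite exp1n muln1 mulnCA -(expnM 2 2) -expnD; congr (_ * 2 ^ _); lia.
Qed.

Section TwinPairing.
Variables (p : nat) (tau : 'I_p -> 'I_p).
Hypotheses (tauK : involutive tau) (tau_neq : forall i, tau i != i).

Local Notation te := (tau_edge tau).

Lemma tau_edge_FV : {in FV p, forall e, te e \in FV p}.
Proof.
move=> [a b]; rewrite !inE /tau_edge /= => ab; case: ifP => //= /negbT.
rewrite -leqNgt leq_eqVlt => /orP[/eqP/val_inj/(can_inj tauK) eba|//].
by rewrite eba ltnn in ab.
Qed.

Lemma tau_edgeK : {in FV p, involutive te}.
Proof.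
move=> [a b]; rewrite inE /= => ab; rewrite {2}/tau_edge /=.
by case: ifP => tab; rewrite /tau_edge /= !tauK ?ab // ltnNge ltnW.
Qed.

Lemma twin_edge_blockE (C : {set edge p}) : C \subset FV p ->
  atomic C || twin_edge_class tau C = twin_block te C.
Proof.
move=> sCF; apply/orP/orP=> -[->|]; try by left.
  by case/existsP=> e /and3P[_ _ eqC]; right; apply/existsP; exists e.
case/existsP=> e /eqP defC; have eF : e \in FV p by rewrite (subsetP sCF) // defC set21.
have [fixe|nfixe] := eqVneq e (te e).
  by left; rewrite defC -fixe setUid /atomic cards1.
by right; apply/existsP; exists e; rewrite eF nfixe defC eqxx.
Qed.

Lemma pdCGs_split : pdCGs tau =
  setX [set P | admissible (twin_block tau) true [set: 'I_p] P]
       [set Q | admissible (twin_block te) false (FV p) Q].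
Proof.
apply/setP=> -[P Q]; rewrite !inE /pdCG /coloured_graph /partition /admissible /=.
rewrite eqxx subsetT /=.
case sQ: (cover Q \subset FV p); last by rewrite !andbF /= ?andbF.
rewrite (eq_forallb_in (P2 := twin_block te)) => [|C CQ]; last first.
  by rewrite twin_edge_blockE // (subset_trans _ sQ) // bigcup_sup.
by rewrite andbT -!andbA; do !bool_congr.
Qed.

Lemma card_vertex_partitions :
  #|[set P | admissible (twin_block tau) true [set: 'I_p] P]| = 2 ^ (p %/ 2).
Proof.
have tauT : {in [set: 'I_p], forall i, tau i \in [set: 'I_p]} by move=> *; apply: in_setT.
have tauKT : {in [set: 'I_p], involutive tau} by move=> i _; apply: tauK.
have no_fixed : [set i in [set: 'I_p] | tau i == i] = set0.
  by apply/setP=> i; rewrite !inE (negbTE (tau_neq i)).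
rewrite (card_admissible_twin tauT tauKT) exp1n mul1n.
have := card_twin_domain tauT tauKT.
rewrite card_twin_orbits1 no_fixed cards0 cardsT card_ord add0n => defp.
by rewrite [in RHS]defp mulKn.
Qed.

(* The fixed edges are the (i, tau i) with i < tau i, and tau exchanges these
   vertices i with the remaining ones. *)
Lemma card_fixed_edges : #|[set e in FV p | te e == e]| = p %/ 2.
Proof.
set H := [set i : 'I_p | i < tau i].
have cardH : #|H| + #|H| = p.
  rewrite -[in RHS](card_ord p) -(cardsC H); congr (_ + _).
  have -> : ~: H = tau @: H.
    apply/setP=> i; rewrite (can2_imset_pre _ tauK tauK) !inE tauK -leqNgt.
    by rewrite leq_eqVlt val_eqE (negbTE (tau_neq i)).
  by rewrite card_imset //; apply: can_inj tauK.
have -> : [set e in FV p | te e == e] = [set (i, tau i) | i in H].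
  apply/setP=> -[a b]; rewrite !inE /=; apply/andP/imsetP=> [[ab]|[i iH [-> ->]]].
    rewrite /tau_edge /=; case: ifP => _ /eqP[ea eb].
      by have := tau_neq a; rewrite ea eqxx.
    by exists a; [rewrite /H inE eb | rewrite eb].
  move: iH; rewrite /H inE => ltiti; split=> //.
  by rewrite /tau_edge /= tauK ltnNge (ltnW ltiti).
rewrite card_imset; last by move=> i j [].
by rewrite -[in RHS]cardH addnn -muln2 mulnK.
Qed.

Lemma card_edge_partitions : ~~ odd p ->
  #|[set Q | admissible (twin_block te) false (FV p) Q]| =
    2 ^ (p %/ 2) * 5 ^ (p * (p - 2) %/ 4).
Proof.
move=> p_even; have := card_twin_domain tau_edge_FV tau_edgeK.
rewrite (card_admissible_twin tau_edge_FV tau_edgeK) card_twin_orbits1 card_fixed_edges.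
by rewrite card_FV bin2_even // => /eqP; rewrite eqn_add2l eqn_pmul2l // => /eqP <-.
Qed.

End TwinPairing.

Theorem mainTheorem9 (p : nat) (tau : 'I_p -> 'I_p) :
  ~~ odd p -> twin_pairing tau ->
  #|pdCGs tau| =
    2 ^ (p %/ 2) *
    \sum_(i < (p * (p - 2) %/ 4).+1)
       'C(p * (p - 2) %/ 4, i) * 2 ^ ('C(p, 2) - 2 * i).
Proof.
move=> p_even /twin_pairing_involution[tauK tau_neq].
rewrite pdCGs_split cardsX card_vertex_partitions // card_edge_partitions //.
by rewrite sum_binomial_pow4 bin2_even // ?addnK // leq_addl.
Qed.
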